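(* Let $A\subseteq\mathbb Z^d$ be a finite set containing $0$ such that the subgroup $\langle A\rangle$ generated by $A$ has rank $d$. If $A$ is individually $C$-incompressible, then $C>d$.
   Context: A finite set $A\subseteq\mathbb Z^d$ with $0\in A$ is individually $C$-incompressible if for every sequence of translates $\{A+u_i\}_{i=1}^I$ with $u_i\notin\bigcup_{j<i}(A+u_j)$ for all $i$, the number of sets $A+u_i$ containing $0$ is at most $C$. *)

From HB Require Import structures.
From mathcomp Require Import all_boot all_order all_algebra.
Set Implicit Arguments. Unset Strict Implicit. Unset Printing Implicit Defensive.
Import Order.TTheory GRing.Theory Num.Theory.
Local Open Scope ring_scope.

Section Defs.
Variable d : nat.
Notation Zd := 'rV[int]_d.

Definition translate (A : seq Zd) (u : Zd) : seq Zd := [seq a + u | a <- A].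

Definition admissible (A : seq Zd) (us : seq Zd) : Prop :=
  forall i, (i < size us)%N -> forall j, (j < i)%N ->
    nth 0 us i \notin translate A (nth 0 us j).

Definition indiv_incompressible (C : nat) (A : seq Zd) : Prop :=
  forall us : seq Zd, admissible A us ->
    (count (fun u => (0%R : Zd) \in translate A u) us <= C)%N.

Definition in_subgroup (A : seq Zd) (x : Zd) : Prop :=
  exists c : seq int, x = \sum_(i < size A) A`_i *~ c`_i.

Definition Zindep (n : nat) (v : 'I_n -> Zd) : Prop :=
  forall c : 'I_n -> int, \sum_(i < n) v i *~ c i = 0 -> forall i, c i = 0.

Definition subgroup_rank (A : seq Zd) (r : nat) : Prop :=
  (exists v : 'I_r -> Zd, (forall i, in_subgroup A (v i)) /\ Zindep v) /\
  (forall n (v : 'I_n -> Zd), (forall i, in_subgroup A (v i)) -> Zindep v -> (n <= r)%N).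

End Defs.

From HB Require Import structures.
From mathcomp Require Import all_boot all_order all_algebra ring lra.
Import Order.TTheory GRing.Theory Num.Theory.
Set Implicit Arguments. Unset Strict Implicit. Unset Printing Implicit Defensive.
Local Open Scope ring_scope.

(* A sequence z_0, ..., z_n of points of A with z_j - z_i \notin A for j < i
   yields the admissible translates A - z_0, ..., A - z_n, all containing 0,
   so n + 1 <= C.  Such a chain is built backwards in Q^d: if f is a linear
   form equal to 1 on the points already chosen, any minimiser y of f on A
   satisfies f (y - x) = f y - 1 < min f, hence y - x \notin A.  Adding to f
   a large multiple of a form vanishing on the span of the chosen points forces
   y out of that span, so as long as A spans more than the chosen points the
   chain grows by a new independent point; rank d allows d such steps, and one
   last minimiser gives the (d+1)-st point. *)

Section Chain.
Variables (F : realFieldType) (V : vectType F) (M : zmodType).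
Variable phi : {additive M -> V}.

Lemma exists_argmin (T : eqType) (s : seq T) (g : T -> F) x0 :
  x0 \in s -> exists2 y, y \in s & {in s, forall z, g y <= g z}.
Proof.
elim: s x0 => // a s IH x0 _.
have [y ys ymin] : exists2 y, y \in a :: s & {in s, forall z, g y <= g z}.
  case: s IH => [|b s] IH; first by exists a; rewrite ?mem_head.
  by have [y ys ymin] := IH b (mem_head b s); exists y; rewrite // in_cons ys orbT.
have [ya|ay] := leP (g y) (g a).
  by exists y => // z /[!in_cons] /predU1P[->|/ymin].
exists a; first exact: mem_head.
by move=> z /[!in_cons] /predU1P[->//|/ymin]; apply: le_trans (ltW ay).
Qed.

Definition coord_sum (X : seq V) (v : V) : F :=
  \sum_(i < size X) coord (in_tuple X) i v.

Lemma coord_sumB X : {morph coord_sum X : u v / u - v}.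
Proof.
by move=> u v; rewrite /coord_sum -sumrB; apply: eq_bigr => i _; rewrite linearB.
Qed.

Lemma coord_sum_mem X x : free X -> x \in X -> coord_sum X x = 1.
Proof.
move=> frX /seq_tnthP[i ->]; rewrite (tnth_nth 0) /coord_sum (bigD1 i) //=.
rewrite coord_free // eqxx big1 ?addr0 // => j /negPf ji.
by rewrite coord_free // eq_sym ji.
Qed.

Lemma coord_head_span (a : V) (X : seq V) v :
  free (a :: X) -> v \in <<X>>%VS -> coord (in_tuple (a :: X)) ord0 v = 0.
Proof.
move=> frY vX; rewrite [v](@coord_span _ _ _ (in_tuple X)) // linear_sum big1 // => i _.
rewrite linearZ /=.
have -> : (in_tuple X)`_i = (in_tuple (a :: X))`_(lift ord0 i) by [].
by rewrite coord_free // eq_sym (negPf (neq_lift _ _)) mulr0.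
Qed.

Lemma argmin_sub_notin (A X : seq M) (f : V -> F) y :
  {morph f : u v / u - v} -> {in X, forall x, f (phi x) = 1} ->
  {in A, forall z, f (phi y) <= f (phi z)} -> {in X, forall x, y - x \notin A}.
Proof.
move=> fB fX ymin x xX; apply/negP => /ymin.
by rewrite raddfB fB (fX x xX) lerDl oppr_ge0 ler10.
Qed.

Lemma chain_cons (A X : seq M) a :
  a \in A -> free (map phi X) -> exists2 y, y \in A & {in X, forall x, y - x \notin A}.
Proof.
move=> aA frX; have [y yA ymin] := exists_argmin (coord_sum (map phi X) \o phi) aA.
exists y => //; apply: argmin_sub_notin ymin; first exact: coord_sumB.
by move=> x xX; rewrite coord_sum_mem ?map_f.
Qed.

Lemma chain_cons_free (A X : seq M) b :
  b \in A -> free (map phi X) -> phi b \notin <<map phi X>>%VS ->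
  exists2 y, y \in A & phi y \notin <<map phi X>>%VS /\ {in X, forall x, y - x \notin A}.
Proof.
move=> bA frX bX; set X' := map phi X; set g := coord_sum X'.
have frY : free (phi b :: X') by rewrite free_cons bX.
set h := coord (in_tuple (phi b :: X')) ord0.
have [z0 _ z0min] := exists_argmin (g \o phi) bA.
(* [f b = min g - 1], while [f = g] on the span of [X']. *)
pose T := g (phi b) - g (phi z0) + 1; pose f v := g v - T * h v.
have fB : {morph f : u v / u - v}.
  by move=> u v; rewrite /f /g /h coord_sumB linearB /=; ring.
have f_span v : v \in <<X'>>%VS -> f v = g v.
  by move=> vX; rewrite /f /h coord_head_span // mulr0 subr0.
have [y yA ymin] := exists_argmin (f \o phi) bA.
exists y => //; split.
  have hb : h (phi b) = 1 by have := coord_free ord0 ord0 (frY : free (in_tuple _)).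
  apply/negP => /f_span yX; have := ymin b bA; have := z0min y yA.
  by rewrite /= yX /f hb /T; lra.
apply: argmin_sub_notin ymin => // x xX.
have xX' : phi x \in X' by exact: map_f.
by rewrite f_span ?memv_span // /g coord_sum_mem.
Qed.

Lemma free_chain (A : seq M) n :
  (n <= \dim <<map phi A>>)%N ->
  exists X, [/\ size X = n, {subset X <= A},
    pairwise (fun y x => y - x \notin A) X & free (map phi X)].
Proof.
elim: n => [_|n IH dimA]; first by exists [::]; split=> //; exact: nil_free.
have [X [sizeX XA chainX frX]] := IH (ltnW dimA).
have [/hasP[b bA bX]|/hasPn AX] := boolP (has (fun a => phi a \notin <<map phi X>>%VS) A).
  have [y yA [yX yX']] := chain_cons_free bA frX bX.
  exists (y :: X); split => /=.
  - by rewrite sizeX.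
  - by move=> z /[!in_cons] /predU1P[->|/XA].
  - by rewrite chainX andbT; apply/allP.
  - by rewrite free_cons yX.
have : (\dim <<map phi A>> <= size X)%N.
  rewrite -(size_map phi); apply: leq_trans (dim_span _).
  apply/dimvS/span_subvP => _ /mapP[a aA ->].
  by have := AX a aA; rewrite negbK.
by move/(leq_trans dimA); rewrite sizeX ltnn.
Qed.

Lemma long_chain (A : seq M) a n :
  a \in A -> (n <= \dim <<map phi A>>)%N ->
  exists Z, [/\ size Z = n.+1, {subset Z <= A} & pairwise (fun y x => y - x \notin A) Z].
Proof.
move=> aA dimA; have [X [sizeX XA chainX frX]] := free_chain dimA.
have [y yA yX] := chain_cons aA frX.
exists (y :: X); split => /=.
- by rewrite sizeX.
- by move=> z /[!in_cons] /predU1P[->|/XA].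
- by rewrite chainX andbT; apply/allP.
Qed.

End Chain.

Section Lattice.
Variable d : nat.
Local Notation Zd := 'rV[int]_d.
Local Notation toQ := (map_mx (intr : int -> rat) : Zd -> 'rV[rat]_d).

Lemma chain_size_le (A zs : seq Zd) C :
  indiv_incompressible C A -> {subset zs <= A} ->
  pairwise (fun y x => y - x \notin A) zs -> (size zs <= C)%N.
Proof.
move=> incA zsA /(pairwiseP 0) chain.
have adm : admissible A (map -%R zs).
  move=> i; rewrite size_map => lt_i j lt_ji.
  rewrite !(nth_map 0) ?(ltn_trans lt_ji) //; apply/mapP => -[a aA /eqP].
  rewrite -subr_eq opprK addrC => /eqP ea.
  by have := chain j i (ltn_trans lt_ji lt_i) lt_i lt_ji; rewrite ea aA.
have := incA _ adm; rewrite (@eq_in_count _ _ predT) ?count_predT ?size_map //.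
move=> _ /mapP[z zA ->]; apply/mapP; exists z; first exact: zsA.
by rewrite subrr.
Qed.

Lemma in_subgroup_span (A : seq Zd) x :
  in_subgroup A x -> toQ x \in <<map toQ A>>%VS.
Proof.
case=> c ->; rewrite raddf_sum; apply: rpred_sum => i _.
by rewrite raddfMz; apply/rpredMz/memv_span/map_f/mem_nth.
Qed.

Lemma Zindep_free n (v : 'I_n -> Zd) :
  Zindep v -> free [tuple toQ (v i) | i < n].
Proof.
move=> indep; apply/freeP => k k0 i.
have {}k0 : \sum_j k j *: toQ (v j) = 0.
  by rewrite -[RHS]k0; apply: eq_bigr => j _; rewrite nth_mktuple.
pose D := \prod_j denq (k j).
pose c j := numq (k j) * \prod_(l | l != j) denq (k l).
have cE j : (c j)%:~R = k j * D%:~R.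
  by rewrite /c /D [in RHS](bigD1 j) //= !intrM numqE; ring.
have c0 : \sum_j v j *~ c j = 0.
  have : toQ (\sum_j v j *~ c j) = 0.
    rewrite raddf_sum; under eq_bigr do rewrite raddfMz -scaler_int cE mulrC -scalerA.
    by rewrite -scaler_sumr k0 scaler0.
  move/rowP=> E; apply/rowP => l.
  by have /eqP := E l; rewrite !mxE intr_eq0 => /eqP.
have := cE i; rewrite (indep c c0 i) => /esym/eqP.
have D0 : D != 0 by apply/prodf_neq0 => j _; exact: denq_neq0.
by rewrite mulf_eq0 intr_eq0 (negPf D0) orbF => /eqP.
Qed.

Lemma rank_le_dim (A : seq Zd) r :
  subgroup_rank A r -> (r <= \dim <<map toQ A>>)%N.
Proof.
case=> -[v [vA indep]] _; have frv := Zindep_free indep.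
rewrite -(size_tuple [tuple toQ (v i) | i < r]) -(eqP frv).
apply/dimvS/span_subvP => _ /tnthP[i ->]; rewrite tnth_mktuple.
exact: in_subgroup_span (vA i).
Qed.

End Lattice.

Theorem proposition2p7 (d : nat) (A : seq 'rV[int]_d) (C : nat) :
  (0 : 'rV[int]_d) \in A ->
  subgroup_rank A d ->
  indiv_incompressible C A ->
  (d < C)%N.
Proof.
move=> A0 rankA incA.
have [zs [size_zs zsA chain]] := long_chain A0 (rank_le_dim rankA).
by rewrite -size_zs; exact: chain_size_le incA zsA chain.
Qed.
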